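(* For the one-dimensional Euler equations, consider the blended scheme $u^{n+1}_k=u^n_k+\lambda(f_{\alpha_{k-\frac12}}-f_{\alpha_{k+\frac12}})$, $\lambda=\Delta t/\Delta x$, with $f_{\alpha_{k+\frac12}}=\alpha_{k+\frac12}g_{k+\frac12}+(1-\alpha_{k+\frac12})h_{k+\frac12}$. If Condition P is satisfied for cell $k$, i.e. \[ c_1\big(u^n_k+2\lambda(f_{\alpha_{k-\frac12}}-f(u^n_k))\big)\le0\quad\text{and}\quad c_1\big(u^n_k+2\lambda(f(u^n_k)-f_{\alpha_{k+\frac12}})\big)\le0 \] with $c_1(u)=-p(u)$, and the CFL restriction $\lambda c_{\max}<0.5$ holds, then \[ p\big(u^n_k+\lambda(f_{\alpha_{k-\frac12}}-f_{\alpha_{k+\frac12}})\big)\ge0. \]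
   Context: Euler equations of gas dynamics: $u=(\rho,\rho v,E)$, $f(u)=(\rho v,\rho v^2+p,v(E+p))$, $p=(\gamma-1)(E-\frac12\rho v^2)$, $\gamma>1$; for $\rho>0$ the pressure is concave in the conserved variables, so $c_1=-p$ is convex. $g$ is the numerical flux of a positivity preserving low-order scheme, $h$ a high-order numerical flux, $\alpha_{k\pm\frac12}\in[0,1]$, and $c_{\max}$ denotes the maximal wave speed. *)

From Stdlib Require Import Reals Lra.
Open Scope R_scope.

(* Conserved variables u = (rho, rho v, E) of the 1D Euler equations. *)
Record state := mkState { rho : R; mom : R; ener : R }.

Definition sadd (u w : state) : state :=
  mkState (rho u + rho w) (mom u + mom w) (ener u + ener w).
Definition sscale (c : R) (u : state) : state :=
  mkState (c * rho u) (c * mom u) (c * ener u).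
Definition ssub (u w : state) : state := sadd u (sscale (-1) w).

Definition vel (u : state) : R := mom u / rho u.

Definition pressure (gamma : R) (u : state) : R :=
  (gamma - 1) * (ener u - mom u ^ 2 / (2 * rho u)).

Definition c1_euler (gamma : R) (u : state) : R := - pressure gamma u.

Definition flux (gamma : R) (u : state) : state :=
  mkState (mom u)
          (mom u * vel u + pressure gamma u)
          (vel u * (ener u + pressure gamma u)).

Definition blend (alpha : R) (g h : state) : state :=
  sadd (sscale alpha g) (sscale (1 - alpha) h).

Definition wave_speed (gamma : R) (u : state) : R :=
  Rabs (vel u) + sqrt (gamma * pressure gamma u / rho u).

From Stdlib Require Import Reals Lra.
Open Scope R_scope.

(* The update u + lam (fl - fr) is the midpoint of the two states
   u + 2 lam (fl - f(u)) and u + 2 lam (f(u) - fr) that Condition P controls.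
   The pressure is (gamma - 1) times internal energy minus the kinetic energy
   m^2 / (2 rho), which is jointly convex for rho > 0; hence the pressure is
   concave there and cannot become negative at a midpoint of two states with
   nonnegative pressure. *)

Definition kinetic_energy (u : state) : R := mom u ^ 2 / (2 * rho u).

Lemma kinetic_energy_convex (t : R) (u w : state) :
  0 <= t <= 1 -> 0 < rho u -> 0 < rho w ->
  kinetic_energy (blend t u w) <= t * kinetic_energy u + (1 - t) * kinetic_energy w.
Proof.
  destruct u as [r1 m1 e1], w as [r2 m2 e2]; unfold kinetic_energy; simpl.
  intros Ht Hr1 Hr2.
  assert (Hr : 0 < t * r1 + (1 - t) * r2) by nra.
  assert (gap : t * (m1 ^ 2 / (2 * r1)) + (1 - t) * (m2 ^ 2 / (2 * r2))
                - (t * m1 + (1 - t) * m2) ^ 2 / (2 * (t * r1 + (1 - t) * r2))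
              = t * (1 - t) * (m1 * r2 - m2 * r1) ^ 2
                / (2 * r1 * r2 * (t * r1 + (1 - t) * r2))).
  { field; lra. }
  assert (gap_nonneg : 0 <= t * (1 - t) * (m1 * r2 - m2 * r1) ^ 2
                            / (2 * r1 * r2 * (t * r1 + (1 - t) * r2))).
  { apply Rle_mult_inv_pos.
    - apply Rmult_le_pos; [nra | apply pow2_ge_0].
    - assert (0 < r1 * r2) by nra; nra. }
  lra.
Qed.

Lemma pressure_concave (gamma t : R) (u w : state) :
  1 <= gamma -> 0 <= t <= 1 -> 0 < rho u -> 0 < rho w ->
  t * pressure gamma u + (1 - t) * pressure gamma w <= pressure gamma (blend t u w).
Proof.
  intros Hg Ht Hu Hw.
  pose proof (kinetic_energy_convex t u w Ht Hu Hw) as Hk.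
  change (pressure gamma ?v) with ((gamma - 1) * (ener v - kinetic_energy v)).
  assert (Hener : ener (blend t u w) = t * ener u + (1 - t) * ener w) by reflexivity.
  rewrite Hener.
  apply Rle_trans with
    ((gamma - 1) * (t * ener u + (1 - t) * ener w
                    - (t * kinetic_energy u + (1 - t) * kinetic_energy w))).
  - lra.
  - apply Rmult_le_compat_l; lra.
Qed.

Lemma pressure_blend_nonneg (gamma t : R) (u w : state) :
  1 <= gamma -> 0 <= t <= 1 -> 0 < rho u -> 0 < rho w ->
  0 <= pressure gamma u -> 0 <= pressure gamma w ->
  0 <= pressure gamma (blend t u w).
Proof.
  intros Hg Ht Hu Hw Pu Pw.
  pose proof (pressure_concave gamma t u w Hg Ht Hu Hw).
  assert (0 <= t * pressure gamma u) by (apply Rmult_le_pos; lra).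
  assert (0 <= (1 - t) * pressure gamma w) by (apply Rmult_le_pos; lra).
  lra.
Qed.

Lemma update_as_midpoint (lam : R) (u f fl fr : state) :
  sadd u (sscale lam (ssub fl fr)) =
  blend (/ 2) (sadd u (sscale (2 * lam) (ssub fl f)))
              (sadd u (sscale (2 * lam) (ssub f fr))).
Proof. unfold blend, sadd, ssub, sscale; simpl; f_equal; field. Qed.

Theorem lemma3p4
  (gamma lam cmax alpha_l alpha_r : R) (u g_l h_l g_r h_r : state) :
  1 < gamma ->
  0 < lam ->
  0 <= alpha_l <= 1 -> 0 <= alpha_r <= 1 ->
  0 < rho u ->
  0 <= pressure gamma u ->
  wave_speed gamma u <= cmax ->
  lam * cmax < / 2 ->
  let fl := blend alpha_l g_l h_l in
  let fr := blend alpha_r g_r h_r in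
  let wl := sadd u (sscale (2 * lam) (ssub fl (flux gamma u))) in
  let wr := sadd u (sscale (2 * lam) (ssub (flux gamma u) fr)) in
  0 < rho wl -> 0 < rho wr ->
  c1_euler gamma wl <= 0 -> c1_euler gamma wr <= 0 ->
  0 <= pressure gamma (sadd u (sscale lam (ssub fl fr))).
Proof.
  intros Hg _ _ _ _ _ _ _ fl fr wl wr Hl Hr Cl Cr.
  unfold c1_euler in Cl, Cr.
  rewrite (update_as_midpoint lam u (flux gamma u) fl fr).
  apply (pressure_blend_nonneg gamma (/ 2) wl wr); lra.
Qed.
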